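(* Let $N=(S,T,F,M_0,\ell)$ and $N'=(S',T',F',M'_0,\ell')$ be two Petri nets, $N'$ being plain. Suppose there is a relation $\mathcal B\subseteq(\mathbb N^S\times\mathbb N^T)\times(\mathbb N^{S'}\times\mathbb N^{T'})$ such that (a) $(M_0,\emptyset)\mathcal B(M'_0,\emptyset)$; (b) if $(M_1,U_1)\mathcal B(M_1',U_1')$ and $(M_1,U_1)\xrightarrow{\tau}(M_2,U_2)$ then $(M_2,U_2)\mathcal B(M_1',U_1')$; (c) if $(M_1,U_1)\mathcal B(M_1',U_1')$ and $(M_1,U_1)\xrightarrow{\eta}(M_2,U_2)$ for some $\eta\in\mathrm{Act}^\pm$ then there is $(M_2',U_2')$ with $(M_1',U_1')\xrightarrow{\eta}(M_2',U_2')$ and $(M_2,U_2)\mathcal B(M_2',U_2')$; (d) if $(M_1,U_1)\mathcal B(M_1',U_1')$ and $(M_1',U_1')\xrightarrow{\eta}$ with $\eta\in\mathrm{Act}^\pm$ then $(M_1,U_1)\xrightarrow{\eta}$ or $(M_1,U_1)\xrightarrow{\tau}$; (e) there is no infinite sequence $(M,U)\xrightarrow{\tau}(M_1,U_1)\xrightarrow{\tau}(M_2,U_2)\xrightarrow{\tau}\cdots$ with $(M,U)\mathcal B(M',U')$ for some $(M',U')$. Then $\mathcal B$ is a branching split bisimulation with explicit divergence, and $N\approx^\Delta_{bSTb}N'$.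
   Context: Fix visible actions $\mathrm{Act}$ and $\tau\notin\mathrm{Act}$. A Petri net $(S,T,F,M_0,\ell)$ has disjoint $S,T$, $F:(S\times T)\cup(T\times S)\to\mathbb N$, $M_0\in\mathbb N^S$, $\ell:T\to\mathrm{Act}\cup\{\tau\}$; ${}^\bullet t(s)=F(s,t)$, $t^\bullet(s)=F(t,s)$; $M[t\rangle M'$ iff ${}^\bullet t\le M$ and $M'=M-{}^\bullet t+t^\bullet$. Plain: $\ell$ injective and never $\tau$. Split markings are pairs $(M,U)\in\mathbb N^S\times\mathbb N^T$ with transitions labelled in $\mathrm{Act}^\pm=\{a^+,a^-\mid a\in\mathrm{Act}\}$ or $\tau$: $(M,U)\xrightarrow{a^+}(M-{}^\bullet t,U+\{t\})$ iff $\ell(t)=a$ and $M[t\rangle$; $(M,U)\xrightarrow{a^-}(M+t^\bullet,U-\{t\})$ iff $t\in U$ and $\ell(t)=a$; $(M,U)\xrightarrow{\tau}(M',U)$ iff $M[t\rangle M'$ for some $t$ with $\ell(t)=\tau$. The split LTS of a net has initial state $(M_0,\emptyset)$. A branching split bisimulation with explicit divergence is a relation $\mathcal B$ between split markings of the two nets relating the initial ones such that: if $\mathfrak M_1\mathcal B\mathfrak M_2$ and $\mathfrak M_1\xrightarrow{\alpha}\mathfrak M_1'$ then $\mathfrak M_2\Rightarrow\mathfrak M_2^\dagger\xrightarrow{(\alpha)}\mathfrak M_2'$ with $\mathfrak M_1\mathcal B\mathfrak M_2^\dagger$, $\mathfrak M_1'\mathcal B\mathfrak M_2'$ ($\Rightarrow$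 reflexive transitive closure of $\xrightarrow{\tau}$; $\xrightarrow{(\alpha)}$ is $\xrightarrow{\alpha}$ or, if $\alpha=\tau$, equality), and symmetrically; and if $\mathfrak M_1\mathcal B\mathfrak M_2$ and an infinite $\tau$-sequence from $\mathfrak M_1$ has all states related to $\mathfrak M_2$ then there is an infinite $\tau$-sequence from $\mathfrak M_2$ with all pairs of states related, and symmetrically. $N\approx^\Delta_{bSTb}N'$ is defined likewise on ST-markings $(M,U)\in\mathbb N^S\times T^*$ with initial state $(M_0,\varepsilon)$ and transitions $(M,U)\xrightarrow{a^+}(M-{}^\bullet t,Ut)$ iff $\ell(t)=a\in\mathrm{Act}$ and $M[t\rangle$; $(M,U)\xrightarrow{a^{-n}}(M+t^\bullet,U^{-n})$ iff the $n$-th element $t$ of $U$ has label $a$ ($U^{-n}$: with it removed); $(M,U)\xrightarrow{\tau}(M',U)$ iff $M[t\rangle M'$ with $\ell(t)=\tau$. *)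

From Stdlib Require Import Relations.
From mathcomp Require Import all_boot.
Set Implicit Arguments. Unset Strict Implicit. Unset Printing Implicit Defensive.

Definition bb_transfer {L X Y : Type} (tau : L)
  (sx : X -> L -> X -> Prop) (sy : Y -> L -> Y -> Prop) (B : X -> Y -> Prop) :=
  forall x y a x', B x y -> sx x a x' ->
    exists y1 y', clos_refl_trans_1n Y (fun u v => sy u tau v) y y1 /\
      (sy y1 a y' \/ (a = tau /\ y' = y1)) /\ B x y1 /\ B x' y'.

Definition bb_div {L X Y : Type} (tau : L)
  (sx : X -> L -> X -> Prop) (sy : Y -> L -> Y -> Prop) (B : X -> Y -> Prop) :=
  forall x y (f : nat -> X), B x y -> f 0 = x ->
    (forall k, sx (f k) tau (f k.+1)) -> (forall k, B (f k) y) ->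
    exists g : nat -> Y, g 0 = y /\ (forall l, sy (g l) tau (g l.+1)) /\
      (forall k l, B (f k) (g l)).

Definition bbisim_div {L X Y : Type} (tau : L)
  (sx : X -> L -> X -> Prop) (sy : Y -> L -> Y -> Prop) (x0 : X) (y0 : Y)
  (B : X -> Y -> Prop) :=
  [/\ B x0 y0,
      bb_transfer tau sx sy B,
      bb_transfer tau sy sx (fun y x => B x y),
      bb_div tau sx sy B &
      bb_div tau sy sx (fun y x => B x y)].

(* A labelled Petri net over visible actions Act; label None stands for tau.
   pre t s = F(s,t), post t s = F(t,s). *)
Record net (Act : Type) := Net {
  place : Type;
  trans : eqType;
  pre : trans -> place -> nat;
  post : trans -> place -> nat;
  M0 : place -> nat;
  lab : trans -> option Act }.
Arguments M0 {Act} n _.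

Definition plain (Act : Type) (N : net Act) :=
  injective (@lab Act N) /\ forall t, @lab Act N t <> None.

Definition enabled Act (N : net Act) (M : place N -> nat) (t : trans N) :=
  forall s, pre t s <= M s.

Inductive slab (Act : Type) := SPlus of Act | SMinus of Act | STau.
Arguments STau {Act}.

Definition split_state Act (N : net Act) := ((place N -> nat) * (trans N -> nat))%type.

Inductive split_step Act (N : net Act) :
  split_state N -> slab Act -> split_state N -> Prop :=
| split_plus M U t a : lab t = Some a -> enabled M t ->
    split_step (M, U) (SPlus a)
      (fun s => M s - pre t s, fun u => U u + nat_of_bool (u == t))
| split_minus M U t a : 0 < U t -> lab t = Some a ->
    split_step (M, U) (SMinus a)
      (fun s => M s + post t s, fun u => U u - nat_of_bool (u == t))
| split_tau M U t : lab t = None -> enabled M t ->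
    split_step (M, U) STau (fun s => M s - pre t s + post t s, U).

Definition split_init Act (N : net Act) : split_state N := (M0 N, fun _ => 0).
Arguments split_init {Act} N.

Definition branching_split_bisim_div Act (N N' : net Act)
  (B : split_state N -> split_state N' -> Prop) :=
  bbisim_div STau (@split_step Act N) (@split_step Act N')
    (split_init N) (split_init N') B.

(* STMinus a n is a^{-n}, n counted from 1. *)
Inductive stlab (Act : Type) := STPlus of Act | STMinus of Act & nat | STTau.
Arguments STTau {Act}.

Definition st_state Act (N : net Act) := ((place N -> nat) * seq (trans N))%type.

Inductive st_step Act (N : net Act) :
  st_state N -> stlab Act -> st_state N -> Prop :=
| st_plus M U t a : lab t = Some a -> enabled M t ->
    st_step (M, U) (STPlus a) (fun s => M s - pre t s, rcons U t)
| st_minus M U1 t U2 a : lab t = Some a ->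
    st_step (M, U1 ++ t :: U2) (STMinus a (size U1).+1)
      (fun s => M s + post t s, U1 ++ U2)
| st_tau M U t : lab t = None -> enabled M t ->
    st_step (M, U) STTau (fun s => M s - pre t s + post t s, U).

Definition st_init Act (N : net Act) : st_state N := (M0 N, [::]).
Arguments st_init {Act} N.

Definition bSTb_equiv Act (N N' : net Act) :=
  exists B : st_state N -> st_state N' -> Prop,
    bbisim_div STTau (@st_step Act N) (@st_step Act N') (st_init N) (st_init N') B.

From mathcomp Require Import all_boot.
From Stdlib Require Import Relations FunctionalExtensionality ClassicalEpsilon Classical.
Set Implicit Arguments. Unset Strict Implicit.

(* Suppose N' is plain. Its split and ST transition systems are then deterministic and
   have no tau-steps, so the only non-trivial clause of a branching bisimulation with
   explicit divergence is the one where N' moves first: given x B y and y --a--> y', the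
   tau-descendants of x all stay related to y by (b); by (d) each of them either does a
   itself, in which case (c) and determinism of N' provide the match, or has a further
   tau-step. If no descendant matched we would get an infinite tau-path from x, which (e)
   forbids. The ST case is reduced to the split case by relating ST-markings whose
   underlying split markings are related by B and whose sequences of current
   transitions carry the same labels. *)

Lemma infinite_path_of_serial (X : Type) (R : X -> X -> Prop) (x : X) :
  (forall x1, clos_refl_trans_1n X R x x1 -> exists x2, R x1 x2) ->
  exists f : nat -> X, f 0 = x /\ forall k, R (f k) (f k.+1).
Proof.
move=> serial; pose P := clos_refl_trans_1n X R x.
have next (p : {x1 | P x1}) : {p' : {x1 | P x1} | R (sval p) (sval p')}.
  case: p => x1 Px1; apply: constructive_indefinite_description.
  have [x2 R12] := serial _ Px1.
  have Px2 : P x2.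
    exact: clos_rt_rt1n (rt_trans _ _ _ _ _ (clos_rt1n_rt _ _ _ _ Px1) (rt_step _ _ _ _ R12)).
  by exists (exist _ x2 Px2).
pose f k := sval (iter k (fun p => sval (next p)) (exist _ x (rt1n_refl _ _ x))).
by exists f; split=> // k; rewrite /f iterS; exact: svalP (next _).
Qed.

Section DeterministicCriterion.
Variables (L X Y : Type) (tau : L).
Variables (sx : X -> L -> X -> Prop) (sy : Y -> L -> Y -> Prop) (B : X -> Y -> Prop).
Hypothesis sy_det : forall y a y1 y2, sy y a y1 -> sy y a y2 -> y1 = y2.
Hypothesis sy_no_tau : forall y y', ~ sy y tau y'.
Hypothesis B_tau : forall x y x2, B x y -> sx x tau x2 -> B x2 y.
Hypothesis B_visible : forall x y a x2, a <> tau -> B x y -> sx x a x2 ->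
  exists y2, sy y a y2 /\ B x2 y2.
Hypothesis B_progress : forall x y a y2, a <> tau -> B x y -> sy y a y2 ->
  (exists x2, sx x a x2) \/ (exists x2, sx x tau x2).
Hypothesis B_no_divergence :
  ~ exists (f : nat -> X) y, B (f 0) y /\ forall k, sx (f k) tau (f k.+1).

Lemma B_tau_star x x1 y :
  clos_refl_trans_1n X (fun u v => sx u tau v) x x1 -> B x y -> B x1 y.
Proof. by elim=> // u v w Huv _ IH Buy; apply/IH/(B_tau Buy). Qed.

Lemma tau_star_visible_match x y a y' : a <> tau -> B x y -> sy y a y' ->
  exists x1 x2, [/\ clos_refl_trans_1n X (fun u v => sx u tau v) x x1,
                    sx x1 a x2, B x1 y & B x2 y'].
Proof.
move=> Ha Bxy Hy; apply: NNPP => no_match; apply: B_no_divergence.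
have [f [f0 Hf]] : exists f : nat -> X, f 0 = x /\ forall k, sx (f k) tau (f k.+1).
  apply: (@infinite_path_of_serial _ (fun u v => sx u tau v)) => x1 Hx1.
  have Bx1 := B_tau_star Hx1 Bxy.
  case: (B_progress Ha Bx1 Hy) => [[x2 Hx2]|//]; case: no_match.
  have [y2 [Hy2 By2]] := B_visible Ha Bx1 Hx2.
  by exists x1, x2; split=> //; rewrite -(sy_det Hy2 Hy).
by exists f, y; rewrite f0.
Qed.

Theorem bbisim_div_of_deterministic x0 y0 : B x0 y0 -> bbisim_div tau sx sy x0 y0 B.
Proof.
move=> B0; split=> //.
- move=> x y a x' Bxy Hx; case: (classic (a = tau)) => [Ea|Ha].
  + subst a; exists y, y; split; first exact: rt1n_refl.
    by split; [right | split=> //; apply: B_tau Hx].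
  + have [y' [Hy By']] := B_visible Ha Bxy Hx.
    by exists y, y'; split; [apply: rt1n_refl | split; [left|]].
- move=> y x a y' Bxy Hy.
  have Ha : a <> tau by move=> Ea; subst a; apply: sy_no_tau Hy.
  have [x1 [x2 [Hx1 Hx2 B1 B2]]] := tau_star_visible_match Ha Bxy Hy.
  by exists x1, x2; split=> //; split; [left|].
- move=> x y f _ f0 Hf Bf; case: B_no_divergence.
  by exists f, y; split; [apply: Bf | apply: Hf].
- by move=> y x g _ _ Hg _; case: (sy_no_tau (Hg 0)).
Qed.

End DeterministicCriterion.

Lemma st_minus_inv Act (N : net Act) (x x' : st_state N) a n :
  st_step x (STMinus a n) x' ->
  exists U1 t U2, [/\ x.2 = U1 ++ t :: U2, n = (size U1).+1, lab t = Some a &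
                      x' = (fun s => x.1 s + post t s, U1 ++ U2)].
Proof. by move=> H; inversion H; exists U1, t, U2. Qed.

Section PlainNet.
Variables (Act : Type) (N : net Act).
Hypothesis HN : plain N.

Lemma split_step_no_tau (y y' : split_state N) : ~ split_step y STau y'.
Proof. by case: HN => _ lab_vis Hy; inversion Hy; case: (lab_vis t). Qed.

Lemma split_step_det (y : split_state N) e y1 y2 :
  split_step y e y1 -> split_step y e y2 -> y1 = y2.
Proof.
case: HN => lab_inj _ H1 H2; case: H1 H2 => [M U t a Ht _|M U t a _ Ht|M U t Ht _] H2.
- by inversion H2; subst; rewrite (lab_inj t t0) ?Ht.
- by inversion H2; subst; rewrite (lab_inj t t0) ?Ht.
- by case: (split_step_no_tau H2).
Qed.

Lemma st_step_no_tau (y y' : st_state N) : ~ st_step y STTau y'.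
Proof. by case: HN => _ lab_vis Hy; inversion Hy; case: (lab_vis t). Qed.

Lemma st_step_det (y : st_state N) l y1 y2 :
  st_step y l y1 -> st_step y l y2 -> y1 = y2.
Proof.
case: HN => lab_inj _ H1 H2; case: H1 H2 => [M U t a Ht _|M U1 t U2 a Ht|M U t Ht _] H2.
- by inversion H2; subst; rewrite (lab_inj t t0) ?Ht.
- have [V1 [v [V2 [/= /eqP Heq [Hsize] _ ->]]]] := st_minus_inv H2.
  by move: Heq; rewrite eqseq_cat // => /andP [/eqP -> /eqP [-> ->]].
- by case: (st_step_no_tau H2).
Qed.

End PlainNet.

Definition mset (T : eqType) (U : seq T) : T -> nat := fun u => count_mem u U.

Lemma mset_rcons (T : eqType) (U : seq T) t :
  mset (rcons U t) = fun u => mset U u + nat_of_bool (u == t).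
Proof.
apply: functional_extensionality => u.
by rewrite /mset -cats1 count_cat /= addn0 eq_sym.
Qed.

Lemma mset_cat_cons (T : eqType) (U1 U2 : seq T) t :
  mset (U1 ++ U2) = fun u => mset (U1 ++ t :: U2) u - nat_of_bool (u == t).
Proof.
apply: functional_extensionality => u.
by rewrite /mset !count_cat /= eq_sym addnCA addKn.
Qed.

Lemma mset_cat_cons_gt0 (T : eqType) (U1 U2 : seq T) t : 0 < mset (U1 ++ t :: U2) t.
Proof. by rewrite /mset count_cat /= eqxx addnCA. Qed.

Lemma map_eq_cat_cons (T S : Type) (f : T -> S) V s1 z s2 :
  map f V = s1 ++ z :: s2 ->
  exists V1 v V2, [/\ V = V1 ++ v :: V2, size V1 = size s1 & f v = z].
Proof.
elim: s1 V => [|z1 s1 IH] [|v V] //= [Ev EV]; first by exists [::], v, V.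
have [V1 [v' [V2 [-> Hsize Hv']]]] := IH _ EV.
by exists (v :: V1), v', V2; rewrite /= Hsize.
Qed.

Section SplitOfST.
Variables (Act : Type) (N : net Act).

Definition split_marking_of (x : st_state N) : split_state N := (x.1, mset x.2).

Definition split_label_of (l : stlab Act) : slab Act :=
  match l with STPlus a => SPlus a | STMinus a _ => SMinus a | STTau => STau end.

Definition update_current_labels (l : stlab Act) (s : seq (option Act)) : seq (option Act) :=
  match l with
  | STPlus a => rcons s (Some a)
  | STMinus _ n => take n.-1 s ++ drop n s
  | STTau => s
  end.

Lemma split_label_of_visible l : l <> STTau -> split_label_of l <> STau.
Proof. by case: l. Qed.

Lemma split_step_of_st x l x' :
  st_step x l x' -> split_step (split_marking_of x) (split_label_of l) (split_marking_of x').
Proof.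
case=> [M U t a Ht He|M U1 t U2 a Ht|M U t Ht He] /=.
- by rewrite /split_marking_of /= mset_rcons; apply: split_plus.
- rewrite /split_marking_of /= (mset_cat_cons U1 U2 t).
  exact: split_minus (mset_cat_cons_gt0 U1 U2 t) Ht.
- exact: split_tau.
Qed.

Lemma map_lab_st_step x l x' :
  st_step x l x' -> map (@lab _ N) x'.2 = update_current_labels l (map (@lab _ N) x.2).
Proof.
case=> [M U t a Ht _|M U1 t U2 a Ht|//] /=; first by rewrite map_rcons Ht.
rewrite !map_cat /= take_size_cat ?size_map // -cat_rcons drop_size_cat //.
by rewrite size_rcons size_map.
Qed.

Lemma st_plus_of_split x a x2 :
  split_step (split_marking_of x) (SPlus a) x2 -> exists x', st_step x (STPlus a) x'.
Proof.
case: x => M U; rewrite /split_marking_of /= => H.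
by inversion H; eexists; apply: st_plus; eassumption.
Qed.

Lemma st_tau_of_split x x2 :
  split_step (split_marking_of x) STau x2 -> exists x', st_step x STTau x'.
Proof.
case: x => M U; rewrite /split_marking_of /= => H.
by inversion H; eexists; apply: st_tau; eassumption.
Qed.

End SplitOfST.

Lemma st_minus_transfer Act (N N' : net Act) (x : st_state N) (y : st_state N') a n x' :
  map (@lab _ N) x.2 = map (@lab _ N') y.2 -> st_step x (STMinus a n) x' ->
  exists y', st_step y (STMinus a n) y'.
Proof.
case: y => M' V /= Lxy Hx; have [U1 [t [U2 [EU En Ht _]]]] := st_minus_inv Hx.
rewrite En; move: Lxy; rewrite EU map_cat /= => /esym Lxy.
have [V1 [v [V2 [-> Hsize Hv]]]] := map_eq_cat_cons Lxy.
have -> : (size U1).+1 = (size V1).+1 by rewrite Hsize size_map.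
by eexists; apply: st_minus; rewrite Hv.
Qed.

Section STRelation.
Variables (Act : Type) (N N' : net Act) (B : split_state N -> split_state N' -> Prop).
Hypothesis HN' : plain N'.
Hypothesis B_tau : forall x y x2, B x y -> split_step x STau x2 -> B x2 y.
Hypothesis B_visible : forall x y eta x2, eta <> STau -> B x y -> split_step x eta x2 ->
  exists y2, split_step y eta y2 /\ B x2 y2.
Hypothesis B_progress : forall x y eta y2, eta <> STau -> B x y -> split_step y eta y2 ->
  (exists x2, split_step x eta x2) \/ (exists x2, split_step x STau x2).
Hypothesis B_no_divergence : ~ exists (f : nat -> split_state N) (y : split_state N'),
  B (f 0) y /\ forall k, split_step (f k) STau (f k.+1).

Definition st_rel (x : st_state N) (y : st_state N') :=
  B (split_marking_of x) (split_marking_of y) /\ map (@lab _ N) x.2 = map (@lab _ N') y.2.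

Lemma st_rel_tau x y x2 : st_rel x y -> st_step x STTau x2 -> st_rel x2 y.
Proof.
move=> [Bxy Lxy] Hx; split; first exact: B_tau Bxy (split_step_of_st Hx).
by rewrite (map_lab_st_step Hx).
Qed.

Lemma st_rel_visible x y l x2 : l <> STTau -> st_rel x y -> st_step x l x2 ->
  exists y2, st_step y l y2 /\ st_rel x2 y2.
Proof.
move=> Hl [Bxy Lxy] Hx.
have [y2 [Hy2 By2]] := B_visible (split_label_of_visible Hl) Bxy (split_step_of_st Hx).
have [y' Hy'] : exists y', st_step y l y'.
  case: l Hl Hx Hy2 => [a|a n|//] _ Hx Hy2; first exact: st_plus_of_split Hy2.
  exact: st_minus_transfer Lxy Hx.
exists y'; split=> //; split.
  by rewrite -(split_step_det HN' Hy2 (split_step_of_st Hy')).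
by rewrite (map_lab_st_step Hx) (map_lab_st_step Hy') Lxy.
Qed.

Lemma st_rel_progress x y l y2 : l <> STTau -> st_rel x y -> st_step y l y2 ->
  (exists x2, st_step x l x2) \/ (exists x2, st_step x STTau x2).
Proof.
move=> Hl [Bxy Lxy] Hy; have Hv := split_label_of_visible Hl.
case: l Hl Hv Hy => [a|a n|//] _ Hv Hy.
- case: (B_progress Hv Bxy (split_step_of_st Hy)) => [[x2 Hx2]|[x2 Hx2]].
  + by left; apply: st_plus_of_split Hx2.
  + by right; apply: st_tau_of_split Hx2.
- by left; apply: st_minus_transfer (esym Lxy) Hy.
Qed.

Lemma st_rel_no_divergence :
  ~ exists (f : nat -> st_state N) y, st_rel (f 0) y /\ forall k, st_step (f k) STTau (f k.+1).
Proof.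
move=> [f [y [[Bf _] Hf]]]; apply: B_no_divergence.
exists (fun k => split_marking_of (f k)), (split_marking_of y); split=> // k.
exact: split_step_of_st (Hf k).
Qed.

End STRelation.

Theorem lemma6p3 (Act : Type) (N N' : net Act) (HN' : plain N')
  (B : split_state N -> split_state N' -> Prop) :
  (* (a) *) B (split_init N) (split_init N') ->
  (* (b) *) (forall x y x2, B x y -> split_step x STau x2 -> B x2 y) ->
  (* (c) *) (forall x y eta x2, eta <> STau -> B x y -> split_step x eta x2 ->
               exists y2, split_step y eta y2 /\ B x2 y2) ->
  (* (d) *) (forall x y eta y2, eta <> STau -> B x y -> split_step y eta y2 ->
               (exists x2, split_step x eta x2) \/ (exists x2, split_step x STau x2)) ->
  (* (e) *) ~ (exists (f : nat -> split_state N) (y : split_state N'),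
               B (f 0) y /\ forall k, split_step (f k) STau (f k.+1)) ->
  branching_split_bisim_div B /\ bSTb_equiv N N'.
Proof.
move=> Ha Hb Hc Hd He; split.
  exact: (bbisim_div_of_deterministic
           (split_step_det HN') (split_step_no_tau HN') Hb Hc Hd He).
exists (st_rel B); apply: bbisim_div_of_deterministic.
- exact: st_step_det HN'.
- exact: st_step_no_tau HN'.
- exact: st_rel_tau Hb.
- exact: st_rel_visible HN' Hc.
- exact: st_rel_progress Hd.
- exact: st_rel_no_divergence He.
- by split.
Qed.
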